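(* Let $a,b,e\in\mathbb Z$ with $a\neq0$, $e>0$, such that $h_2(j)=aj^2+bj+e$ satisfies $h_2(j)\ge 0$ for all integers $j\ge0$. Let $\alpha=a/e$, $\beta=b/e$ and $$f(x)=\tfrac12x^2-\left(\alpha+\beta+\tfrac32\right)x+(5\alpha+3\beta+2).$$ Assume $\alpha+\beta\ge 2$. If there exists an integer $d$ with $3\le d\le c(h_2)+1$ and $f(d)<0$, then $\operatorname{hdepth}(h_2)<d$.
   Context: Let $\mathcal H_0$ denote the set of functions $h:\mathbb Z_{\ge 0}\to\mathbb Z_{\ge 0}$ with $h(0)>0$. For $h\in\mathcal H_0$ and integers $0\le k\le d$, put $\beta_k^d(h)=\sum_{j=0}^k(-1)^{k-j}\binom{d-j}{k-j}h(j)$. The Hilbert depth of $h$ is $\operatorname{hdepth}(h)=\max\{d\in\mathbb Z_{\ge0}:\ \beta_k^d(h)\ge 0\text{ for all }0\le k\le d\}$; this set contains $d=0$ and is known to be bounded above by $c(h):=\lfloor h(1)/h(0)\rfloor$, so the maximum exists. *)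

From mathcomp Require Import all_boot all_order all_algebra.
Set Implicit Arguments. Unset Strict Implicit. Unset Printing Implicit Defensive.
Import Order.TTheory GRing.Theory Num.Theory.
Local Open Scope ring_scope.

(* Hilbert functions h : Z_{>=0} -> Z_{>=0} are represented as nat -> int
   (nonnegativity is a hypothesis where relevant). *)

Definition betak (h : nat -> int) (d k : nat) : int :=
  \sum_(j < k.+1) (-1) ^+ (k - j)%N * ('C(d - j, k - j))%:Z * h j.

Definition hgood (h : nat -> int) (d : nat) : bool :=
  [forall k : 'I_d.+1, 0 <= betak h d k].

Definition cbound (h : nat -> int) : nat := (`|h 1%N| %/ `|h 0%N|)%N.

(* hdepth(h) = max { d : all beta_k^d(h) >= 0 }; the set is known to be
   contained in [0, c(h)], so the max is taken over d <= c(h). *)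
Definition hdepth (h : nat -> int) : nat :=
  (\max_(d < (cbound h).+1 | hgood h d) d)%N.

Definition h2 (a b e : int) : nat -> int :=
  fun j => a * (j%:Z) ^+ 2 + b * j%:Z + e.

Definition fpoly (alpha beta x : rat) : rat :=
  x ^+ 2 / 2 - (alpha + beta + 3 / 2) * x + (5 * alpha + 3 * beta + 2).

From mathcomp Require Import all_boot all_order all_algebra.
From mathcomp Require Import ring lra.

(* For the quadratic h2 one computes beta_1^D = e (alpha + beta + 1 - D) and
   beta_2^D = e f(D).  So if all beta_k^D are nonnegative for some D >= d, then
   D <= alpha + beta + 1 and f(D) >= 0.  But the parabola f decreases on
   (-oo, alpha + beta + 3/2], which contains [d, D], so f(D) <= f(d) < 0.
   Only e > 0, d >= 2 and f(d) < 0 are used. *)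

Set Implicit Arguments.
Unset Strict Implicit.
Unset Printing Implicit Defensive.

Import Order.TTheory GRing.Theory Num.Theory.
Local Open Scope ring_scope.

Lemma betak1 (h : nat -> int) (D : nat) : betak h D 1 = h 1%N - D%:Z * h 0%N.
Proof.
rewrite /betak !big_ord_recr big_ord0 /= subn0 subnn bin0 bin1 /= subn0 expr1 expr0.
ring.
Qed.

Lemma betak2 (h : nat -> int) (D : nat) : (0 < D)%N ->
  2 * betak h D 2 =
  D%:Z * (D%:Z - 1) * h 0%N - 2 * (D%:Z - 1) * h 1%N + 2 * h 2%N.
Proof.
case: D => // D _.
have bin2S : 2 * ('C(D.+1, 2))%:Z = D.+1%:Z * D%:Z.
  by rewrite -[2]/(2%:Z) -PoszM mulnC bin_ffact ffactnS ffactn1.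
have predS : D.+1%:Z - 1 = D%:Z by rewrite -addn1 PoszD addrK.
rewrite /betak !big_ord_recr big_ord0 /= !subSS !subn0 bin0 bin1 predS.
rewrite expr0 expr1 expr2.
transitivity (2 * ('C(D.+1, 2))%:Z * h 0%N - 2 * D%:Z * h 1%N + 2 * h 2%N);
  first by ring.
by rewrite bin2S.
Qed.

Lemma hgood_betak (h : nat -> int) (d k : nat) :
  hgood h d -> (k <= d)%N -> 0 <= betak h d k.
Proof. by move=> /forallP good kd; have := good (Ordinal (kd : k < d.+1)%N). Qed.

Lemma fpoly_le (alpha beta x y : rat) : y <= x -> x <= alpha + beta + 3 / 2 ->
  fpoly alpha beta x <= fpoly alpha beta y.
Proof.
move=> yx x_le; rewrite -subr_ge0.
have -> : fpoly alpha beta y - fpoly alpha beta x =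
    (x - y) * (alpha + beta + 3 / 2 - (x + y) / 2) by rewrite /fpoly; field.
by rewrite mulr_ge0 //; lra.
Qed.

Section QuadraticHilbertFunction.
Variables a b e : int.
Let alpha : rat := a%:~R / e%:~R.
Let beta : rat := b%:~R / e%:~R.

Lemma h2_rat (e_neq0 : e != 0) (j : nat) :
  (h2 a b e j)%:~R = e%:~R * (alpha * j%:R ^+ 2 + beta * j%:R + 1) :> rat.
Proof.
have eR_neq0 : e%:~R != 0 :> rat by rewrite intr_eq0.
rewrite /h2 /alpha /beta !intrD !intrM -!pmulrn.
by field.
Qed.

Lemma betak1_h2 (e_neq0 : e != 0) (D : nat) :
  (betak (h2 a b e) D 1)%:~R = e%:~R * (alpha + beta + 1 - D%:R) :> rat.
Proof.
rewrite betak1 intrB intrM !h2_rat // -pmulrn.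
ring.
Qed.

Lemma betak2_h2 (e_neq0 : e != 0) (D : nat) : (0 < D)%N ->
  (betak (h2 a b e) D 2)%:~R = e%:~R * fpoly alpha beta D%:R :> rat.
Proof.
move=> D_gt0; apply: (@mulfI _ 2) => //.
have betak2_rat (h : nat -> int) : 2 * (betak h D 2)%:~R =
    D%:R * (D%:R - 1) * (h 0%N)%:~R - 2 * (D%:R - 1) * (h 1%N)%:~R
    + 2 * (h 2%N)%:~R :> rat.
  rewrite -[2 in LHS]/(2%:~R) -intrM betak2 //.
  by rewrite !(intrD, intrB, intrM, intrN) -pmulrn.
rewrite betak2_rat !h2_rat // /fpoly.
by field.
Qed.

Lemma hgood_h2_bound (e_gt0 : 0 < e) (D : nat) : (0 < D)%N ->
  hgood (h2 a b e) D -> D%:R <= alpha + beta + 1.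
Proof.
move=> D_gt0 good; have := hgood_betak good D_gt0.
by rewrite -(ler0z rat) betak1_h2 ?gt_eqF // pmulr_rge0 ?ltr0z // subr_ge0.
Qed.

Lemma hgood_h2_fpoly_ge0 (e_gt0 : 0 < e) (D : nat) : (1 < D)%N ->
  hgood (h2 a b e) D -> 0 <= fpoly alpha beta D%:R.
Proof.
move=> D_gt1 good; have := hgood_betak good D_gt1.
by rewrite -(ler0z rat) betak2_h2 ?gt_eqF ?(ltnW D_gt1) // pmulr_rge0 ?ltr0z.
Qed.

Lemma hgood_h2_ltn (e_gt0 : 0 < e) (d D : nat) : (1 < d)%N ->
  fpoly alpha beta d%:R < 0 -> hgood (h2 a b e) D -> (D < d)%N.
Proof.
move=> d_gt1 fd_lt0 good; rewrite ltnNge; apply/negP => dD.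
have D_gt1 : (1 < D)%N := leq_trans d_gt1 dD.
have D_le := hgood_h2_bound e_gt0 (ltnW D_gt1) good.
have fD_ge0 := hgood_h2_fpoly_ge0 e_gt0 D_gt1 good.
have : fpoly alpha beta D%:R <= fpoly alpha beta d%:R.
  by apply: fpoly_le; [rewrite ler_nat | lra].
lra.
Qed.

End QuadraticHilbertFunction.

Theorem lemma2p3 (a b e : int) (ha : a != 0) (he : 0 < e)
  (hnn : forall j : nat, 0 <= h2 a b e j)
  (hab : 2 <= (a%:~R / e%:~R : rat) + b%:~R / e%:~R)
  (d : nat) (hd3 : (3 <= d)%N) (hdc : (d <= (cbound (h2 a b e)).+1)%N)
  (hf : fpoly (a%:~R / e%:~R) (b%:~R / e%:~R) d%:R < 0) :
  (hdepth (h2 a b e) < d)%N.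
Proof.
case: d hd3 hdc hf => // d hd3 _ hf.
rewrite ltnS; apply/bigmax_leqP => D good; rewrite -ltnS.
exact: (hgood_h2_ltn he (ltnW hd3) hf good).
Qed.
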